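(* Let $A=\mathbb C\langle u^{\pm1},v^{\pm1}\rangle$ and $c=uvu^{-1}v^{-1}$. For every $H\in A$ one has $\{H,c\}_K=0$; in particular, for each $H$ (equivalently each class in $A/[A,A]$, since $\{H,\cdot\}_K$ depends only on $\pi(H)$) the Hamilton flow $\frac{d}{dt}x=\{H,x\}_K$ preserves $c$.
   Context: $A$ is the group algebra over $\mathbb C$ of the free group on $u,v$; $[A,A]$ is the span of all $ab-ba$; $\pi:A\to A/[A,A]$ the projection. $\mu(a\otimes b)=ab$; $A\otimes A$ has componentwise multiplication. The double bracket $\llbracket\cdot\rrbracket_K:A\otimes A\to A\otimes A$ is the linear map with $\llbracket u\otimes v\rrbracket_K=-vu\otimes1$, $\llbracket v\otimes u\rrbracket_K=uv\otimes1$, $\llbracket u\otimes u\rrbracket_K=\llbracket v\otimes v\rrbracket_K=0$, extended (also to inverse letters) by the Leibniz rules $\llbracket a\otimes bc\rrbracket_K=\llbracket a\otimes b\rrbracket_K(1\otimes c)+(b\otimes1)\llbracket a\otimes c\rrbracket_K$ and $\llbracket ab\otimes c\rrbracket_K=\llbracket a\otimes c\rrbracket_K(b\otimes1)+(1\otimes a)\llbracket b\otimes c\rrbracket_K$. The bracket is $\{a,b\}_K=\mu(\llbracket a\otimes b\rrbracket_K)$. *)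

(* Coefficients: the complex numbers R[i] = complex R over an
   arbitrary realType R (every realType is a model of the real numbers).
   The group algebra C<u^{+-1},v^{+-1}> of the free group F(u,v) is the
   free C-module {malg C[fgrp]} on the free group fgrp, whose elements are
   represented by reduced words. *)
From HB Require Import structures.
From mathcomp Require Import all_boot all_order all_algebra.
From mathcomp Require Import reals.
From mathcomp Require Import complex.
From mathcomp Require Import finmap.
From mathcomp.multinomials Require Import monalg.

Set Implicit Arguments.
Unset Strict Implicit.
Unset Printing Implicit Defensive.

Import GRing.Theory Num.Theory.
Local Open Scope ring_scope.

(* A letter is (g, e): g = false for u, g = true for v;                 *)
(* e = false for the letter itself, e = true for its inverse.           *)
Definition letter := (bool * bool)%type.
Definition word := seq letter.
Definition inv_letter (l : letter) : letter := (l.1, ~~ l.2).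

Definition lu : letter := (false, false).
Definition lv : letter := (true, false).
Definition lui : letter := (false, true).
Definition lvi : letter := (true, true).

Definition reduced (w : word) : bool :=
  sorted (fun a b => b != inv_letter a) w.

Definition red_cons (l : letter) (w : word) : word :=
  if w is l' :: w' then (if l' == inv_letter l then w' else l :: w) else [:: l].
Definition reduce (w : word) : word := foldr red_cons [::] w.

Lemma reduce_reduced (w : word) : reduced (reduce w).
Proof.
rewrite /reduced; elim: w => [|l w IH] //=.
case: (reduce w) IH => [|l' w'] //= Hp.
case: eqP => [_|Hne]; first by case: w' Hp => //= a w'' /andP[].
by rewrite /= Hp andbT; apply/eqP.
Qed.

Definition fgrp := {w : word | reduced w}.

Definition fg (w : word) : fgrp := exist _ (reduce w) (reduce_reduced w).
Definition fmul (x y : fgrp) : fgrp := fg (val x ++ val y).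

Section GroupAlgebra.
Variable R : realType.
Local Notation C := R[i].

(* A = C[F(u,v)], and A (x) A = C[F(u,v) x F(u,v)] *)
Definition A := {malg C[fgrp]}.
Definition AA := {malg C[(fgrp * fgrp)%type]}.

Definition amul (f g : A) : A :=
  \sum_(x <- msupp f) \sum_(y <- msupp g) << f@_x * g@_y *g fmul x y >>.

Definition tens (f g : A) : AA :=
  \sum_(x <- msupp f) \sum_(y <- msupp g) << f@_x * g@_y *g (x, y) >>.

Definition mu (t : AA) : A :=
  \sum_(p <- msupp t) << t@_p *g fmul p.1 p.2 >>.

Definition tact (a1 a2 b1 b2 : word) (t : AA) : AA :=
  \sum_(p <- msupp t)
     << t@_p *g (fg (a1 ++ val p.1 ++ b1), fg (a2 ++ val p.2 ++ b2)) >>.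

Definition bt (w1 w2 : word) : AA := << (fg w1, fg w2) >>.

(* values on generators:  [[u (x) v]] = - vu (x) 1,  [[v (x) u]] = uv (x) 1,
   [[u (x) u]] = [[v (x) v]] = 0 *)
Definition bgen (x y : bool) : AA :=
  match x, y with
  | false, true => - bt [:: lv; lu] [::]
  | true, false => bt [:: lu; lv] [::]
  | _, _ => 0
  end.

(* extension to inverse letters, forced by the Leibniz rules:
   [[a (x) y^-1]] = - (y^-1 (x) 1) [[a (x) y]] (1 (x) y^-1)
   [[x^-1 (x) c]] = - (1 (x) x^-1) [[x (x) c]] (x^-1 (x) 1) *)
Definition bl1 (x : bool) (m : letter) : AA :=
  if m.2 then - tact [:: m] [::] [::] [:: m] (bgen x m.1) else bgen x m.1.
Definition bl (l m : letter) : AA :=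
  if l.2 then - tact [::] [:: l] [:: l] [::] (bl1 l.1 m) else bl1 l.1 m.

(* Leibniz rule in the second argument:
   [[a (x) m w]] = [[a (x) m]] (1 (x) w) + (m (x) 1) [[a (x) w]] *)
Fixpoint dbr_lw (l : letter) (w : word) : AA :=
  match w with
  | [::] => 0
  | m :: w' => tact [::] [::] [::] w' (bl l m) + tact [:: m] [::] [::] [::] (dbr_lw l w')
  end.

(* Leibniz rule in the first argument:
   [[l w (x) c]] = [[l (x) c]] (w (x) 1) + (1 (x) l) [[w (x) c]] *)
Fixpoint dbrw (w1 w2 : word) : AA :=
  match w1 with
  | [::] => 0
  | l :: w1' => tact [::] [::] w1' [::] (dbr_lw l w2) + tact [::] [:: l] [::] [::] (dbrw w1' w2)
  end.

Definition dbrK (t : AA) : AA :=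
  \sum_(p <- msupp t) t@_p *: dbrw (val p.1) (val p.2).

Definition brK (a b : A) : A := mu (dbrK (tens a b)).

Definition cK : A := << fg [:: lu; lv; lui; lvi] >>.

End GroupAlgebra.

From HB Require Import structures.
From mathcomp Require Import all_boot all_order all_algebra.
From mathcomp Require Import reals complex.
From mathcomp Require Import finmap.
From mathcomp.multinomials Require Import monalg.
Local Open Scope ring_scope.
Import GRing.Theory.

(* Write mu_ins a b c for the linear map p (x) q |-> a p b q c, so that
   mu = mu_ins 1 1 1 and the componentwise actions in the Leibniz rules only
   move words into a, b, c.  For a letter l and any word Q, expanding
   [[l (x) c]] letter by letter gives
     mu_ins 1 Q 1 [[l (x) c]] = uv (Q l) u^-1 v^-1 - uv (l Q) u^-1 v^-1.
   Expanding [[w (x) c]] along the letters of w, these differences telescope to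
     mu_ins 1 Q 1 [[w (x) c]] = uv (Q w) u^-1 v^-1 - uv (w Q) u^-1 v^-1,
   which vanishes for Q = 1; linearity in H does the rest. *)

Lemma inv_letterK : involutive inv_letter.
Proof. by case=> a b; rewrite /inv_letter /= negbK. Qed.

Lemma reduced_foldr x s : reduced s -> reduced (foldr red_cons s x).
Proof.
move=> rs; elim: x => [|m r] //=; rewrite /reduced.
case: (foldr red_cons s r) => [|m' r'] //= Hp.
case: eqP => [_|ne]; first by case: r' Hp => //= a r'' /andP[].
by rewrite /= Hp andbT; apply/eqP.
Qed.

Lemma red_cons_inv l s : reduced s -> red_cons l (red_cons (inv_letter l) s) = s.
Proof.
case: s => [|m s] /=; first by rewrite /red_cons eqxx.
rewrite /red_cons inv_letterK; case: eqP => [->|_] /=; last by rewrite eqxx.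
by case: s => [|m' s] //= /andP[/negPf ->].
Qed.

Lemma foldr_red_cons_reduce x s : reduced s ->
  foldr red_cons s (reduce x) = foldr red_cons s x.
Proof.
move=> rs; elim: x => [|l x IH] //=; rewrite -IH.
case: (reduce x) => [|l' r] //=.
by case: eqP => [->|_] //=; rewrite red_cons_inv // reduced_foldr.
Qed.

Lemma reduce_cat_reduce x y z : reduce (x ++ reduce y ++ z) = reduce (x ++ y ++ z).
Proof.
by rewrite /reduce !foldr_cat foldr_red_cons_reduce // reduced_foldr.
Qed.

Lemma fg_cat_reduce x y z : fg (x ++ reduce y ++ z) = fg (x ++ y ++ z).
Proof. by apply: val_inj; rewrite /= reduce_cat_reduce. Qed.

Lemma fg_cat_reduce2 x y z w v :
  fg (x ++ reduce y ++ z ++ reduce w ++ v) = fg (x ++ y ++ z ++ w ++ v).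
Proof.
rewrite fg_cat_reduce.
have -> : x ++ y ++ z ++ reduce w ++ v = (x ++ y ++ z) ++ reduce w ++ v by rewrite !catA.
by rewrite fg_cat_reduce !catA.
Qed.

Lemma fg_reduce_sides p Q s : fg (reduce p ++ Q ++ reduce s) = fg (p ++ Q ++ s).
Proof. by have := fg_cat_reduce2 [::] p Q s [::]; rewrite /= !cats0. Qed.

Section LinearExtension.
Context {S : ringType}.

Section Basics.
Context {K : choiceType} {V : lmodType S}.

Definition mlin (f : K -> V) (t : {malg S[K]}) : V := \sum_(k <- msupp t) t@_k *: f k.

Lemma mlinEw f {t} {d : {fset K}} :
  (msupp t `<=` d)%fset -> mlin f t = \sum_(k <- d) t@_k *: f k.
Proof.
move=> le; rewrite /mlin (big_fset_incl _ le) //= => x _ /mcoeff_outdom ->.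
by rewrite scale0r.
Qed.

Lemma mlin0 f : mlin f 0 = 0.
Proof. by rewrite /mlin msupp0 big_seq_fset0. Qed.

Lemma mlinD f t1 t2 : mlin f (t1 + t2) = mlin f t1 + mlin f t2.
Proof.
rewrite (mlinEw _ (msuppD_le t1 t2)) (mlinEw _ (fsubsetUl _ (msupp t2))).
rewrite (mlinEw _ (fsubsetUr (msupp t1) _)) -big_split /=.
by apply: eq_bigr => k _; rewrite mcoeffD scalerDl.
Qed.

Lemma mlinZ f c t : mlin f (c *: t) = c *: mlin f t.
Proof.
rewrite (mlinEw _ (msuppZ_le c t)) /mlin scaler_sumr.
by apply: eq_bigr => k _; rewrite mcoeffZ scalerA.
Qed.

Lemma mlinN f t : mlin f (- t) = - mlin f t.
Proof. by rewrite -(scaleN1r t) mlinZ scaleN1r. Qed.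

Lemma mlinU f c k : mlin f << c *g k >> = c *: f k.
Proof. by rewrite (mlinEw _ msuppU_le) big_seq_fset1 mcoeffUU. Qed.

Lemma mlin_sum f (I : Type) (s : seq I) (F : I -> {malg S[K]}) :
  mlin f (\sum_(i <- s) F i) = \sum_(i <- s) mlin f (F i).
Proof. exact: (big_morph _ (mlinD f) (mlin0 f)). Qed.

Lemma eq_mlin f g t : f =1 g -> mlin f t = mlin g t.
Proof. by move=> e; apply: eq_bigr => k _; rewrite e. Qed.

End Basics.

Lemma mlin_comp {K K' : choiceType} {V : lmodType S} (f : K' -> V) (g : K -> {malg S[K']}) t :
  mlin f (mlin g t) = mlin (fun k => mlin f (g k)) t.
Proof. by rewrite [mlin g t]/mlin mlin_sum; apply: eq_bigr => k _; rewrite mlinZ. Qed.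

Lemma sum_malgU {K K' : choiceType} (h : K -> K') t :
  \sum_(k <- msupp t) << t@_k *g h k >> = mlin (fun k => << h k >> : {malg S[K']}) t.
Proof.
apply: eq_bigr => k _; apply/malgP => k'.
by rewrite mcoeffZ !mcoeffU; case: eqP; rewrite ?mulr1 ?mulr0.
Qed.

End LinearExtension.

(* tact, bt and dbr_lw unfold to big sums, and unifying a rewrite rule with such
   a non-matching subterm can diverge: mu_ins is therefore locked, and some
   rewrites below are confined to one summand. *)
HB.lock Definition mu_ins (R : realType) (a b c : word) (t : AA R) : A R :=
  mlin (fun p : fgrp * fgrp => << fg (a ++ val p.1 ++ b ++ val p.2 ++ c) >>) t.

Section SandwichedProduct.
Variable R : realType.

Lemma mu_ins0 a b c : mu_ins R a b c 0 = 0.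
Proof. by rewrite unlock mlin0. Qed.

Lemma mu_insD a b c t1 t2 : mu_ins R a b c (t1 + t2) = mu_ins R a b c t1 + mu_ins R a b c t2.
Proof. by rewrite unlock mlinD. Qed.

Lemma mu_insN a b c t : mu_ins R a b c (- t) = - mu_ins R a b c t.
Proof. by rewrite unlock mlinN. Qed.

Lemma mu_ins_bt a b c x y : mu_ins R a b c (bt R x y) = << fg (a ++ x ++ b ++ y ++ c) >>.
Proof. by rewrite unlock /bt mlinU scale1r /= fg_cat_reduce2. Qed.

Lemma mu_ins_tact a b c a1 a2 b1 b2 t :
  mu_ins R a b c (tact a1 a2 b1 b2 t) = mu_ins R (a ++ a1) (b1 ++ b ++ a2) (b2 ++ c) t.
Proof.
rewrite unlock /tact sum_malgU mlin_comp; apply: eq_mlin => p.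
by rewrite mlinU scale1r /= fg_cat_reduce2 !catA.
Qed.

Lemma muE t : mu t = mu_ins R [::] [::] [::] t.
Proof. by rewrite unlock /mu sum_malgU; apply: eq_mlin => p /=; rewrite cats0. Qed.

Lemma mu_insZ a b c k t : mu_ins R a b c (k *: t) = k *: mu_ins R a b c t.
Proof. by rewrite unlock mlinZ. Qed.

Lemma mu_ins_sum a b c (I : Type) (s : seq I) (F : I -> AA R) :
  mu_ins R a b c (\sum_(i <- s) F i) = \sum_(i <- s) mu_ins R a b c (F i).
Proof. exact: (big_morph _ (mu_insD a b c) (mu_ins0 a b c)). Qed.

Lemma mu_ins_dbr_lw_cons a b c l m w :
  mu_ins R a b c (dbr_lw R l (m :: w)) =
  mu_ins R a b (w ++ c) (bl R l m) + mu_ins R (a ++ [:: m]) b c (dbr_lw R l w).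
Proof.
cbn [dbr_lw]; rewrite mu_insD.
by congr (_ + _); rewrite mu_ins_tact /= ?cats0.
Qed.

Lemma mu_ins_dbr_lw a b c l w : mu_ins R a b c (dbr_lw R l w) =
  \sum_(i < size w) mu_ins R (a ++ take i w) b (drop i.+1 w ++ c) (bl R l (nth l w i)).
Proof.
elim: w a => [|m w IH] a; first by rewrite big_ord0 mu_ins0.
rewrite mu_ins_dbr_lw_cons IH big_ord_recl /= cats0 drop0.
by congr (_ + _); apply: eq_bigr => i _; rewrite -catA.
Qed.

Lemma mu_ins_bl a b c l m :
  mu_ins R a b c (bl R l m) = (-1) ^+ (l.2 (+) m.2) *:
    mu_ins R (a ++ nseq m.2 m) (nseq l.2 l ++ b ++ nseq l.2 l) (nseq m.2 m ++ c) (bgen R l.1 m.1).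
Proof.
case: l m => x [] [y []]; rewrite /bl /bl1 /=.
all: by rewrite ?(mu_insN, mu_ins_tact) /= ?cats0 ?expr1 ?scale1r ?scaleN1r ?opprK.
Qed.

Lemma mu_ins_bgen a b c x y : mu_ins R a b c (bgen R x y) =
  if x == y then 0 else (-1) ^+ (~~ x) *: << fg (a ++ [:: (y, false); (x, false)] ++ b ++ c) >>.
Proof. by case: x; case: y; rewrite /= ?mu_ins0 ?mu_insN ?mu_ins_bt ?scale1r ?scaleN1r. Qed.

Lemma mu_ins_bgen_mid a b1 Q b2 c x y : mu_ins R a (b1 ++ Q ++ b2) c (bgen R x y) =
  if x == y then 0 else
  (-1) ^+ (~~ x) *: << fg (reduce (a ++ [:: (y, false); (x, false)] ++ b1) ++ Q ++ reduce (b2 ++ c)) >>.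
Proof. by rewrite mu_ins_bgen fg_reduce_sides !catA. Qed.

End SandwichedProduct.

Definition cword : word := [:: lu; lv; lui; lvi].

Section CommutatorBracket.
Variable R : realType.

Definition uv_conj (Q : word) : A R := << fg ([:: lu; lv] ++ Q ++ [:: lui; lvi]) >>.

Lemma mu_ins_dbr_lw_cword Q l :
  mu_ins R [::] Q [::] (dbr_lw R l cword) = uv_conj (Q ++ [:: l]) - uv_conj (l :: Q).
Proof.
(* Bring every term to the form fg (reduce x ++ Q ++ reduce y) with x, y
   concrete, so that the reductions compute once l is known. *)
have -> : uv_conj (Q ++ [:: l]) =
    << fg (reduce [:: lu; lv] ++ Q ++ reduce [:: l; lui; lvi]) >>.
  by rewrite fg_reduce_sides /uv_conj -catA.
have -> : uv_conj (l :: Q) = << fg (reduce [:: lu; lv; l] ++ Q ++ reduce [:: lui; lvi]) >>.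
  by rewrite fg_reduce_sides.
rewrite mu_ins_dbr_lw /= !big_ord_recl big_ord0 /= !mu_ins_bl !mu_ins_bgen_mid.
case: l => [[] []] /=.
all: rewrite ?expr0 ?expr1 ?scale1r ?scaleN1r ?scaler0 ?opprK ?oppr0 ?addr0 ?add0r.
all: by [|rewrite addrC].
Qed.

Lemma mu_ins_dbrw_cword w P :
  mu_ins R [::] P [::] (dbrw R w cword) = uv_conj (P ++ w) - uv_conj (w ++ P).
Proof.
elim: w P => [|l w IH] P; first by rewrite mu_ins0 cats0 subrr.
cbn [dbrw]; rewrite mu_insD [X in X + _]mu_ins_tact [X in _ + X]mu_ins_tact /=.
rewrite cats0 mu_ins_dbr_lw_cword IH.
by rewrite -!catA /= addrC addrA subrK.
Qed.

Lemma mu_dbrw_cword w : mu (dbrw R w cword) = 0.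
Proof. by rewrite muE mu_ins_dbrw_cword cats0 subrr. Qed.

Lemma tens_malgU (H : A R) k :
  tens H << k >> = \sum_(x <- msupp H) << H@_x *g (x, k) >>.
Proof.
by apply: eq_bigr => x _; rewrite msuppU oner_eq0 big_seq_fset1 mcoeffUU mulr1.
Qed.

End CommutatorBracket.

Theorem mainTheorem5 (R : realType) (H : A R) : brK H (cK R) = 0.
Proof.
rewrite /brK tens_malgU muE.
have -> : forall t, dbrK t = mlin (fun p : fgrp * fgrp => dbrw R (val p.1) (val p.2)) t by [].
rewrite mlin_sum mu_ins_sum big1 // => x _.
by rewrite mlinU mu_insZ -muE mu_dbrw_cword scaler0.
Qed.
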